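(* Let $\mathbb{X}$ be a $0$-dimensional Polish space and $\mathbb{A}\subseteq\mathbb{X}\times\mathbb{X}$. The following are equivalent: (a) for every $0$-dimensional Polish space $X$ and every relation $A\subseteq X\times X$, if there is no continuous map $c:X\to\omega$ with $c(x)\neq c(y)$ for all $(x,y)\in A$, then there is a continuous $f:\mathbb{X}\to X$ with $(f(x),f(y))\in A$ for all $(x,y)\in\mathbb{A}$; (b) there is a family $(C^\varepsilon_i)_{(\varepsilon,i)\in2\times\omega}$ of pairwise disjoint clopen subsets of $\mathbb{X}$ such that $\mathbb{A}\subseteq\bigcup_{i\in\omega}C^0_i\times C^1_i$.
   Context: $\omega$ carries the discrete topology. *)

From mathcomp Require Import all_boot all_order all_algebra.
From mathcomp Require Import all_classical all_reals all_analysis.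
From Stdlib Require Reals.

Set Implicit Arguments.
Unset Strict Implicit.
Unset Printing Implicit Defensive.

Local Open Scope classical_set_scope.

Notation Real := Stdlib.Reals.Rdefinitions.R.
Notation R0 := Stdlib.Reals.Rdefinitions.R0.
Notation Rlt := Stdlib.Reals.Rdefinitions.Rlt.
Notation Rle := Stdlib.Reals.Rdefinitions.Rle.
Notation Rplus := Stdlib.Reals.Rdefinitions.Rplus.

Definition is_metric (T : Type) (d : T -> T -> Real) : Prop :=
  [/\ (forall x y, Rle R0 (d x y)),
      (forall x y, d x y = R0 <-> x = y),
      (forall x y, d x y = d y x) &
      (forall x y z, Rle (d x z) (Rplus (d x y) (d y z)))].

Definition metric_induces_topology (T : topologicalType) (d : T -> T -> Real)
  : Prop :=
  forall U : set T, open U <->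
    (forall x, U x -> exists e, Rlt R0 e /\ (forall y, Rlt (d x y) e -> U y)).

Definition metric_complete (T : Type) (d : T -> T -> Real) : Prop :=
  forall u : nat -> T,
    (forall e, Rlt R0 e -> exists N, forall m n, (N <= m)%N -> (N <= n)%N ->
        Rlt (d (u m) (u n)) e) ->
    exists l, forall e, Rlt R0 e -> exists N, forall n, (N <= n)%N ->
        Rlt (d (u n) l) e.

Definition separable_space (T : topologicalType) : Prop :=
  exists D : set T, countable D /\ dense D.

Definition polish_space (T : topologicalType) : Prop :=
  separable_space T /\
  exists d : T -> T -> Real,
    [/\ is_metric d, metric_induces_topology d & metric_complete d].

Definition zero_dim (T : topologicalType) : Prop :=
  forall (U : set T) (x : T), open U -> U x ->
    exists V : set T, [/\ clopen V, V x & V `<=` U].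

From mathcomp Require Import all_boot all_order all_algebra.
From mathcomp Require Import all_classical all_reals all_analysis.
From HB Require Import structures.
From mathcomp Require Import zify.
From Stdlib Require Import Rdefinitions RIneq Rbasic_fun Lra.

(* (a) => (b): apply (a) to omega + 1 with the relation joining the isolated
   points 2i+1 and 2i+2.  Continuity at the limit point forbids a continuous
   omega-colouring, and the preimages of the isolated points under the map
   given by (a) form the required clopen family.
   (b) => (a): if A has no continuous omega-colouring, some point z is a limit
   of A-edges; otherwise, by separability and 0-dimensionality, countably many
   clopen A-independent sets cover X, and sending each point to the first set
   containing it is a colouring.  Choosing edges (x_i, y_i) converging to z,
   the map that is x_i on C^0_i, y_i on C^1_i and z elsewhere is continuous,
   because a neighbourhood of z contains all but finitely many edges. *)

Set Implicit Arguments.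
Unset Strict Implicit.
Unset Printing Implicit Defensive.

Local Open Scope classical_set_scope.

Definition omega_colorable (X : topologicalType) (A : set (X * X)) : Prop :=
  exists c : X -> nat, continuous c /\ (forall x y, A (x, y) -> c x <> c y).

Definition continuous_hom (XX X : topologicalType) (AA : set (XX * XX))
    (A : set (X * X)) : Prop :=
  exists f : XX -> X, continuous f /\ (forall x y, AA (x, y) -> A (f x, f y)).

Definition clopen_separation (XX : topologicalType) (AA : set (XX * XX)) : Prop :=
  exists C : bool -> nat -> set XX,
    (forall e i, clopen (C e i)) /\
    (forall e i e' j, (e, i) <> (e', j) -> C e i `&` C e' j = set0) /\
    AA `<=` \bigcup_(i in [set: nat]) (C false i `*` C true i).

Definition independent (X : Type) (A : set (X * X)) (W : set X) : Prop :=
  forall x y, A (x, y) -> W x -> W y -> False.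

Lemma open_of_open_nbhs (T : topologicalType) (U : set T) :
  (forall x, U x -> exists2 V, open_nbhs x V & V `<=` U) -> open U.
Proof. by move=> HU; rewrite openE => x /HU; rewrite /interior nbhsE. Qed.

Lemma first_index_continuous (X : topologicalType) (W : nat -> set X) :
  (forall n, clopen (W n)) -> (forall z, exists n, W n z) ->
  exists c : X -> nat, continuous c /\ forall z, W (c z) z.
Proof.
move=> W_clopen W_cover.
have W_cover' z : exists n, `[< W n z >].
  by have [n Wnz] := W_cover z; exists n; apply/asboolP.
pose c z := ex_minn (W_cover' z).
have cP z : W (c z) z /\ forall n, W n z -> (c z <= n)%N.
  rewrite /c; case: ex_minnP => n /asboolP Wnz n_min.
  by split => // k /asboolP /n_min.
have fiber n : c @^-1` [set n] = W n `\` \bigcup_(k in `I_n) W k.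
  apply/seteqP; split => z /=.
    move=> <-; split; first exact: (cP z).1.
    by move=> [k /= kc /(cP z).2]; rewrite leqNgt kc.
  move=> [Wnz before_n]; apply/eqP; rewrite eqn_leq (cP z).2 //= leqNgt.
  by apply/negP => czn; apply: before_n; exists (c z); last exact: (cP z).1.
exists c; split => [|z]; last exact: (cP z).1.
apply/continuousP => S _.
have -> : c @^-1` S = \bigcup_(n in S) c @^-1` [set n].
  apply/seteqP; split => [z Sz|z [n Sn]]; first by exists (c z).
  by rewrite /preimage /= => ->.
apply: bigcup_open => n _; rewrite fiber; apply: openI; first exact: (W_clopen n).1.
rewrite openC; apply: closed_bigcup => [|k _]; [exact: finite_II|exact: (W_clopen k).2].
Qed.

Definition radius (n : nat) : Rdefinitions.R := / INR n.+1.

Lemma radius_gt0 n : Rlt R0 (radius n).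
Proof. by apply: Rinv_0_lt_compat; apply: lt_0_INR; lia. Qed.

Lemma radius_lt e : Rlt R0 e -> exists N, forall n, (N <= n)%N -> Rlt (radius n) e.
Proof.
move=> e_gt0; have [N N_gt] := INR_unbounded (/ e); exists N => n Nn.
have N_le : Rle (INR N) (INR n.+1) by apply: le_INR; lia.
rewrite /radius -[e]Rinv_inv; apply: Rinv_lt_contravar.
  by apply: Rmult_lt_0_compat; [apply: Rinv_0_lt_compat | apply: lt_0_INR; lia].
lra.
Qed.

Definition mball (T : Type) (d : T -> T -> Rdefinitions.R) (z : T) (r : Rdefinitions.R) : set T :=
  [set y | Rlt (d z y) r].

Section MetricTopology.
Variables (X : topologicalType) (d : X -> X -> Rdefinitions.R).
Hypotheses (d_metric : is_metric d) (d_top : metric_induces_topology d).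

Lemma mball_center z r : Rlt R0 r -> mball d z r z.
Proof. by case: d_metric => _ d_eq0 _ _; rewrite /mball /= (proj2 (d_eq0 z z)). Qed.

Lemma open_mball z r : open (mball d z r).
Proof.
case: d_metric => _ _ _ d_tri; apply/(d_top _).2 => y yB.
exists (Rminus r (d z y)); split => [|w yw]; first by rewrite /mball /= in yB; lra.
by have := d_tri z y w; rewrite /mball /= in yB *; lra.
Qed.

Lemma mball_radius_sub U z : open U -> U z ->
  exists N, forall n, (N <= n)%N -> mball d z (radius n) `<=` U.
Proof.
move=> oU Uz; have [r [r_gt0 rU]] := (d_top U).1 oU z Uz.
have [N Nr] := radius_lt r_gt0; exists N => n Nn y yB; apply: rU.
by have := Nr n Nn; rewrite /mball /= in yB; lra.
Qed.

Lemma mball_radius_shrink U z : open U -> U z ->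
  exists N, forall q, mball d z (radius N) q -> mball d q (radius N) `<=` U.
Proof.
case: d_metric => _ _ _ d_tri oU Uz.
have [k kU] := mball_radius_sub oU Uz.
have [N Nk] := radius_lt (Rmult_lt_0_compat _ _ (radius_gt0 k) (Rinv_0_lt_compat 2 Rlt_0_2)).
exists N => q zq y qy; apply: (kU k (leqnn k)).
have := Nk N (leqnn N); have := d_tri z q y; rewrite /mball /= in zq qy *; lra.
Qed.

End MetricTopology.

Definition metric_open (T : Type) (d : T -> T -> Rdefinitions.R) (U : set T) : Prop :=
  forall x, U x -> exists e, Rlt R0 e /\ forall y, Rlt (d x y) e -> U y.

Section MetricOpen.
Variables (T : Type) (d : T -> T -> Rdefinitions.R).

Lemma metric_openT : metric_open d setT.
Proof. by move=> x _; exists R1; split => //; apply: Rlt_0_1. Qed.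

Lemma metric_openI : setI_closed (metric_open d).
Proof.
move=> A B oA oB x [Ax Bx].
have [e1 [e1_gt0 e1A]] := oA x Ax; have [e2 [e2_gt0 e2B]] := oB x Bx.
exists (Rmin e1 e2); split; first exact: Rmin_glb_lt.
move=> y xy; split; [apply: e1A | apply: e2B]; apply: (Rlt_le_trans _ _ _ xy);
  [exact: Rmin_l | exact: Rmin_r].
Qed.

Lemma metric_open_bigcup (I : Type) (F : I -> set T) :
  (forall i, metric_open d (F i)) -> metric_open d (\bigcup_i F i).
Proof.
move=> oF x [i _ Fix]; have [e [e_gt0 eF]] := oF i x Fix.
by exists e; split => // y /eF Fiy; exists i.
Qed.

End MetricOpen.

Ltac Rmax_lra := unfold Rmax in *; repeat destruct Rle_dec; lra.

(* The space omega + 1, realised on nat: the isolated points n.+1 converge to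
   the limit point 0, and the ultrametric places n.+1 at height 1/(n+1). *)
Definition seqlim := nat.
HB.instance Definition _ := Choice.on seqlim.

Definition height (n : seqlim) : Rdefinitions.R := if n is m.+1 then radius m else R0.

Definition seqlim_dist (a b : seqlim) : Rdefinitions.R :=
  if a == b then R0 else Rmax (height a) (height b).

HB.instance Definition _ := isOpenTopological.Build seqlim
  (metric_openT seqlim_dist) (@metric_openI _ seqlim_dist)
  (@metric_open_bigcup _ seqlim_dist).

Lemma seqlim_openE (U : set seqlim) : open U = metric_open seqlim_dist U.
Proof. by []. Qed.

Lemma height_ge0 n : Rle R0 (height n).
Proof. by case: n => [|m]; [exact: Rle_refl | exact/Rlt_le/radius_gt0]. Qed.

Lemma seqlim_dist_neq a b : a <> b -> seqlim_dist a b = Rmax (height a) (height b).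
Proof. by rewrite /seqlim_dist; case: eqP. Qed.

Lemma seqlim_dist0S n : seqlim_dist 0%N n.+1 = radius n.
Proof. by rewrite seqlim_dist_neq //=; have := radius_gt0 n; Rmax_lra. Qed.

Lemma seqlim_dist_ultra a b c :
  Rle (seqlim_dist a c) (Rmax (seqlim_dist a b) (seqlim_dist b c)).
Proof.
have := height_ge0 a; have := height_ge0 b; have := height_ge0 c.
by rewrite /seqlim_dist; do 3 case: eqP => ?; subst => //=; rewrite ?eqxx; Rmax_lra.
Qed.

Lemma seqlim_dist_metric : is_metric seqlim_dist.
Proof.
have dist_ge0 a b : Rle R0 (seqlim_dist a b).
  rewrite /seqlim_dist; case: eqP => _; first exact: Rle_refl.
  exact: Rle_trans (height_ge0 a) (Rmax_l _ _).
split; first exact: dist_ge0.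
- move=> a b; split => [|->]; last by rewrite /seqlim_dist eqxx.
  rewrite /seqlim_dist; case: eqP => // ab.
  case: a b ab => [|a] [|b] //= _.
  + by have := radius_gt0 b; Rmax_lra.
  + by have := radius_gt0 a; Rmax_lra.
  + by have := radius_gt0 a; have := radius_gt0 b; Rmax_lra.
- by move=> a b; rewrite /seqlim_dist eq_sym; case: eqP => // _; exact: Rmax_comm.
- move=> a b c.
  by have := seqlim_dist_ultra a b c; have := dist_ge0 a b; have := dist_ge0 b c;
    Rmax_lra.
Qed.

(* A Cauchy sequence is either eventually constant or converges to 0, since
   two distinct points are at distance at least the height of either. *)
Lemma seqlim_dist_complete : metric_complete seqlim_dist.
Proof.
move=> u u_cauchy.
have [[N uN]|not_const] := EM (exists N, forall n, (N <= n)%N -> u n = u N).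
  by exists (u N) => e e_gt0; exists N => n /uN ->; rewrite /seqlim_dist eqxx.
exists 0%N => e e_gt0; have [N uN] := u_cauchy e e_gt0; exists N => n Nn.
have [m [nm umn]] : exists m, (n <= m)%N /\ u m <> u n.
  apply: contrapT => const; apply: not_const; exists n => m nm.
  by apply: contrapT => umn; apply: const; exists m.
have := uN n m Nn (leq_trans Nn nm); rewrite seqlim_dist_neq; last by move/esym.
have := height_ge0 (u m); rewrite /seqlim_dist; case: eqP => _ /=; Rmax_lra.
Qed.

Lemma seqlim_mball_clopen x e : Rlt R0 e -> clopen (mball seqlim_dist x e).
Proof.
move=> e_gt0.
have [_ _ dist_sym _] := seqlim_dist_metric.
split; rewrite -?openC seqlim_openE => y /= xy.
  exists e; split => // z yz.
  by have := seqlim_dist_ultra x y z; rewrite /mball /= in xy *; Rmax_lra.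
exists e; split => // z yz xz.
by apply: xy; have := seqlim_dist_ultra x z y; rewrite (dist_sym z y) /mball /= in xz *;
  Rmax_lra.
Qed.

Lemma seqlim_zero_dim : zero_dim seqlim.
Proof.
move=> U x; rewrite seqlim_openE => /[apply] -[e [e_gt0 eU]].
exists (mball seqlim_dist x e); split => //; first exact: seqlim_mball_clopen.
by rewrite /mball /= /seqlim_dist eqxx.
Qed.

Lemma seqlim_polish : polish_space seqlim.
Proof.
split.
  exists setT; split; last by move=> O [x Ox] _; exists x.
  by apply/countable_injP; exists id.
by exists seqlim_dist; split; [exact: seqlim_dist_metric | | exact: seqlim_dist_complete].
Qed.

Lemma seqlim_succ_clopen n : clopen [set n.+1 : seqlim].
Proof.
have -> : [set n.+1 : seqlim] = mball seqlim_dist n.+1 (radius n).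
  apply/seteqP; split => y; rewrite /mball /=.
    by move=> ->; rewrite /seqlim_dist eqxx; exact: radius_gt0.
  move=> yB; apply: contrapT => yn; move: yB.
  by rewrite seqlim_dist_neq; [rewrite /=; Rmax_lra | move/esym].
exact/seqlim_mball_clopen/radius_gt0.
Qed.

Definition seqlim_edges : set (seqlim * seqlim) :=
  [set p | exists i, p = ((2 * i).+1, (2 * i).+2)].

Lemma seqlim_edges_not_colorable : ~ omega_colorable seqlim_edges.
Proof.
move=> [c [c_cont c_col]].
have := (continuousP c).1 c_cont [set c 0%N] (discrete_open _).
rewrite seqlim_openE => /(_ 0%N erefl) -[e [e_gt0 ec]].
have [N Ne] := radius_lt e_gt0.
have near0 k : (N <= k)%N -> c k.+1 = c 0%N.
  by move=> Nk; apply: ec; rewrite seqlim_dist0S; exact: Ne.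
apply: (c_col (2 * N).+1 (2 * N).+2); first by exists N.
by rewrite !near0 //; lia.
Qed.

Lemma clopen_separation_of_seqlim_hom (XX : topologicalType) (AA : set (XX * XX)) :
  continuous_hom AA seqlim_edges -> clopen_separation AA.
Proof.
move=> [f [f_cont f_hom]].
exists (fun e i => f @^-1` [set (2 * i + e).+1 : seqlim]); split; [|split].
- by move=> e i; apply: preimage_clopen => //; exact: seqlim_succ_clopen.
- move=> e i e' j ei_neq; apply/seteqP; split => // x [/= -> []] ei_eq.
  by apply: ei_neq; case: e e' ei_eq => -[] /= ei_eq; congr pair; lia.
- move=> [x y] /f_hom [i [fx fy]]; exists i => //.
  by rewrite /preimage /= fx fy addn0 addn1.
Qed.

Lemma clopen_separation_of_universal (XX : topologicalType) (AA : set (XX * XX)) :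
  (forall (X : topologicalType) (A : set (X * X)), polish_space X -> zero_dim X ->
     ~ omega_colorable A -> continuous_hom AA A) ->
  clopen_separation AA.
Proof.
move=> universal; apply: clopen_separation_of_seqlim_hom.
exact: universal seqlim_polish seqlim_zero_dim seqlim_edges_not_colorable.
Qed.

Section CountableClopenCover.
Variables (X : topologicalType) (d : X -> X -> Rdefinitions.R).
Hypotheses (X_sep : separable_space X) (X_zd : zero_dim X)
  (d_metric : is_metric d) (d_top : metric_induces_topology d).

(* The cover is indexed by pairs (code of a point q of the dense set, N): the
   set for that pair contains the ball of radius [radius N] around q whenever
   some clopen set with property P does. *)
Lemma countable_clopen_cover (P : set X -> Prop) :
  P set0 -> (forall U V, U `<=` V -> P V -> P U) ->
  (forall z, exists2 U, open_nbhs z U & P U) ->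
  exists W : nat -> set X, (forall n, clopen (W n) /\ P (W n)) /\
    forall z, exists n, W n z.
Proof.
move=> P0 P_sub P_local; have [D [D_count D_dense]] := X_sep.
have [g g_inj] := countable_injP D D_count.
pose centered (mk : nat * nat) (W : set X) :=
  exists2 q, D q /\ g q = mk.1 & mball d q (radius mk.2) `<=` W.
have W_ex mk : exists W, [/\ clopen W, P W &
    (exists W0, [/\ clopen W0, P W0 & centered mk W0]) -> centered mk W].
  have [[W0 [W0_cl PW0 cW0]]|none] := EM (exists W0, [/\ clopen W0, P W0 & centered mk W0]).
    by exists W0.
  by exists set0; split => //; exact: clopen0.
have [W' W'P] := choice W_ex.
pose W n := if choice.unpickle n is Some mk then W' mk else set0.
exists W; split => [n|z].
  by rewrite /W; case: choice.unpickle => [mk|]; [case: (W'P mk) | split; [exact: clopen0|]].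
have [U [oU Uz] PU] := P_local z.
have [V [V_cl Vz VU]] := X_zd oU Uz.
have [N Nsub] := mball_radius_shrink d_metric d_top V_cl.1 Vz.
have [q [zq Dq]] : mball d z (radius N) `&` D !=set0.
  apply: D_dense; last exact: open_mball.
  by exists z; apply/mball_center/radius_gt0.
have [_ _ /(_ _)[|q' [Dq' gq'] q'W]] := W'P (g q, N).
  by exists V; split => //; [exact: P_sub PU | exists q => //; exact: Nsub].
have q'E : q' = q by apply: g_inj; rewrite ?inE.
subst q'.
exists (choice.pickle (g q, N)); rewrite /W choice.pickleK; apply: q'W.
by case: d_metric => _ _ d_sym _; rewrite /mball /= d_sym.
Qed.

Lemma edge_accumulation_point (A : set (X * X)) : ~ omega_colorable A ->
  exists z, forall N, exists p : X * X,
    [/\ A p, mball d z (radius N) p.1 & mball d z (radius N) p.2].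
Proof.
move=> not_col; apply: contrapT => no_acc; apply: not_col.
have local z : exists2 U, open_nbhs z U & independent A U.
  have [N indep] : exists N, independent A (mball d z (radius N)).
    apply: contrapT => dependent; apply: no_acc; exists z => N.
    apply: contrapT => no_edge; apply: dependent; exists N => x y Axy zx zy.
    by apply: no_edge; exists (x, y).
  exists (mball d z (radius N)) => //.
  by split; [exact: open_mball | exact/mball_center/radius_gt0].
have indep0 : independent A set0 by move=> x y _ [].
have indep_sub U V : U `<=` V -> independent A V -> independent A U.
  by move=> UV indepV x y Axy /UV Vx /UV Vy; exact: indepV Axy Vx Vy.
have [W [W_cl W_cover]] := countable_clopen_cover indep0 indep_sub local.
have [c [c_cont cW]] := first_index_continuous (fun n => (W_cl n).1) W_cover.
exists c; split => // x y Axy cxy.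
by apply: (W_cl (c x)).2 Axy (cW x) _; rewrite cxy; exact: cW.
Qed.

End CountableClopenCover.

Section Glue.
Variables (X Y : topologicalType) (C : bool -> nat -> set X).
Hypotheses (C_clopen : forall e i, clopen (C e i))
  (C_disj : forall e i e' j, (e, i) <> (e', j) -> C e i `&` C e' j = set0).

Lemma exists_glue (p : bool -> nat -> Y) (z : Y) :
  exists f : X -> Y, (forall e i x, C e i x -> f x = p e i) /\
    forall x, (forall e i, ~ C e i x) -> f x = z.
Proof.
have fP x : exists v : Y, (forall e i, C e i x -> v = p e i) /\
    ((forall e i, ~ C e i x) -> v = z).
  have [[e [i Cx]]|notC] := EM (exists e i, C e i x); last first.
    by exists z; split => // e i Cx; case: notC; exists e, i.
  exists (p e i); split => [e' i' Cx'|/(_ e i Cx) //].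
  have [[-> ->] //|ei_neq] := eqVneq (e, i) (e', i').
  have := C_disj (elimN eqP ei_neq).
  by move/seteqP => [/(_ x (conj Cx Cx'))].
have [f {}fP] := choice fP.
by exists f; split => [e i x|x]; [exact: (fP x).1 | exact: (fP x).2].
Qed.

Lemma continuous_glue (p : bool -> nat -> Y) (z : Y) :
  (forall U, open U -> U z -> exists N, forall e i, (N <= i)%N -> U (p e i)) ->
  exists f : X -> Y, continuous f /\ forall e i x, C e i x -> f x = p e i.
Proof.
move=> p_cvg; have [f [fC f_out]] := exists_glue p z.
exists f; split => //; apply/continuousP => U oU; apply: open_of_open_nbhs => x Ufx.
have [[e [i Cx]]|notC] := EM (exists e i, C e i x).
  exists (C e i) => [|y Cy]; first by split; [exact: (C_clopen e i).1|].
  by rewrite /preimage /= (fC _ _ _ Cy) -(fC _ _ _ Cx).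
have fxz : f x = z by apply: f_out => e i Cx; apply: notC; exists e, i.
have [N Np] : exists N, forall e i, (N <= i)%N -> U (p e i).
  by apply: p_cvg; rewrite -?fxz.
exists (~` \bigcup_(i in `I_N) (C false i `|` C true i)).
  split; last by move=> [i _ [Cx|Cx]]; apply: notC; [exists false, i | exists true, i].
  rewrite openC; apply: closed_bigcup => [|i _]; first exact: finite_II.
  by apply: closedU; [exact: (C_clopen false i).2 | exact: (C_clopen true i).2].
move=> y y_far; rewrite /preimage /=.
have [[e [i Cy]]|notCy] := EM (exists e i, C e i y).
  rewrite (fC _ _ _ Cy); apply: Np; rewrite leqNgt; apply/negP => iN.
  by apply: y_far; exists i => //; case: e Cy; [right | left].
by rewrite f_out -?fxz // => e i Cy; apply: notCy; exists e, i.
Qed.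

End Glue.

Lemma universal_of_clopen_separation (XX : topologicalType) (AA : set (XX * XX)) :
  clopen_separation AA ->
  forall (X : topologicalType) (A : set (X * X)), polish_space X -> zero_dim X ->
    ~ omega_colorable A -> continuous_hom AA A.
Proof.
move=> [C [C_cl [C_disj AA_sub]]] X A [X_sep [d [d_metric d_top _]]] X_zd not_col.
have [z z_acc] := edge_accumulation_point X_sep X_zd d_metric d_top not_col.
have [edge edgeP] := choice z_acc.
pose p e i := if e then (edge i).2 else (edge i).1.
have p_cvg U : open U -> U z -> exists N, forall e i, (N <= i)%N -> U (p e i).
  move=> oU Uz; have [N NU] := mball_radius_sub d_top oU Uz.
  by exists N => -[] i Ni; apply: (NU i Ni); case: (edgeP i).
have [f [f_cont fC]] := continuous_glue C_cl C_disj p_cvg.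
exists f; split => // x y /AA_sub [i _ [/= Cx Cy]].
by rewrite (fC _ _ _ Cx) (fC _ _ _ Cy) /p; case: (edgeP i); case: (edge i).
Qed.

Theorem proposition3p5 (XX : topologicalType) (AA : set (XX * XX)) :
  polish_space XX -> zero_dim XX ->
  ((forall (X : topologicalType) (A : set (X * X)),
       polish_space X -> zero_dim X ->
       ~ (exists c : X -> nat, continuous c /\
            (forall x y, A (x, y) -> c x <> c y)) ->
       exists f : XX -> X, continuous f /\
            (forall x y, AA (x, y) -> A (f x, f y)))
   <->
   (exists C : bool -> nat -> set XX,
       (forall e i, clopen (C e i)) /\
       (forall e i e' j, (e, i) <> (e', j) -> C e i `&` C e' j = set0) /\
       AA `<=` \bigcup_(i in [set: nat]) (C false i `*` C true i))).
Proof.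
move=> _ _; split; first exact: clopen_separation_of_universal.
exact: universal_of_clopen_separation.
Qed.
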